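(* Let $q,r,\nu$ be positive integers with $q+1\le\nu\le q+r-1$ (so $r\ge2$). Let \[ \bar K(z)=\begin{pmatrix} I_q\otimes F(z)+S_q\otimes F'(z) & -(\ell_q\varphi^\top)\otimes G(z)\\ 0 & I_{\nu-q}\otimes I_r-S_{\nu-q}\otimes G(z)\end{pmatrix}\in\mathbb{C}^{\nu r\times(\nu r-q)}. \] Then $\mathcal{N}^0(z)\bar K(z)=0$ for all $z$, and the columns of $\bar K(z)$ form a basis of the kernel of $\mathcal{N}^0(z)$.
   Context: Matrix indices start at $0$. $u(z)=(1,\dots,z^{q-1})^\top$, $w(z)=(1,\dots,z^{r-1})$, $M(z)=u(z)w(z)$, $\mathcal{N}^0(z)=\big(\frac{1}{0!}M(z),\dots,\frac{1}{(\nu-1)!}M^{(\nu-1)}(z)\big)\in\mathbb{C}^{q\times\nu r}$. $F(z)\in\mathbb{C}^{r\times(r-1)}$ has entries $F_{ii}=-z$, $F_{i+1,i}=1$, zero otherwise; $F'$ is its $z$-derivative. $G(z)\in\mathbb{C}^{r\times r}$ has entries $G_{ij}=z^{j-i-1}$ for $j>i$, $0$ otherwise. $S_n$ is the $n\times n$ shift matrix with $(S_n)_{ij}=\delta_{i+1,j}$. $\ell_q$ is the last standard basis vector of $\mathbb{R}^q$ and $\varphi$ the first standard basis vector of $\mathbb{R}^{\nu-q}$. Thus $\bar K$ has $q$ diagonal blocks $F$ (with $F'$ directly above each but the first), then $\nu-q$ diagonal blocks $I_r$ with $-G$ directly above each. *)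

From HB Require Import structures.
From mathcomp Require Import all_boot all_order all_algebra.
From mathcomp Require Import mxtens zify.
Set Implicit Arguments. Unset Strict Implicit. Unset Printing Implicit Defensive.
Import Order.TTheory GRing.Theory Num.Theory.
Local Open Scope ring_scope.

Section Defs.
Variable C : numClosedFieldType.

(* u(z) = (1, z, ..., z^(q-1))^T and w(z) = (1, z, ..., z^(r-1)) as
   polynomial vectors, so that M = u w is a polynomial matrix in z. *)
Definition upoly (q : nat) : 'cV[{poly C}]_q := \col_(i < q) 'X^i.
Definition wpoly (r : nat) : 'rV[{poly C}]_r := \row_(j < r) 'X^j.
Definition Mpoly (q r : nat) : 'M[{poly C}]_(q, r) := upoly q *m wpoly r.

Definition Mder (q r k : nat) (z : C) : 'M[C]_(q, r) :=
  map_mx (fun p : {poly C} => (p^`(k)).[z]) (Mpoly q r).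

Lemma sum_const_r (nu r : nat) : (\sum_(k < nu) r = nu * r)%N.
Proof. by rewrite sum_nat_const card_ord. Qed.

Definition N0 (q r nu : nat) (z : C) : 'M[C]_(q, nu * r) :=
  castmx (erefl q, sum_const_r nu r)
    (\mxrow_(k < nu) (((k`!)%:R)^-1 *: Mder q r k z)).

Definition Fpoly (r : nat) : 'M[{poly C}]_(r, r.-1) :=
  \matrix_(i < r, j < r.-1)
    (if (i == j :> nat) then - 'X else if (i == j.+1 :> nat) then 1 else 0).
Definition Fm (r : nat) (z : C) : 'M[C]_(r, r.-1) :=
  map_mx (fun p : {poly C} => p.[z]) (Fpoly r).
Definition Fder (r : nat) (z : C) : 'M[C]_(r, r.-1) :=
  map_mx (fun p : {poly C} => (p^`()).[z]) (Fpoly r).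

Definition Gm (r : nat) (z : C) : 'M[C]_r :=
  \matrix_(i < r, j < r) (if (i < j)%N then z ^+ (j - i - 1) else 0).

Definition shiftmx (n : nat) : 'M[C]_n :=
  \matrix_(i < n, j < n) ((i.+1 == j :> nat)%:R).

Definition ell (q : nat) : 'cV[C]_q := \col_(i < q) ((i == q.-1 :> nat)%:R).
Definition phi (n : nat) : 'cV[C]_n := \col_(i < n) ((i == 0 :> nat)%:R).

Lemma Kbar_rows (q r nu : nat) : (q <= nu)%N -> (q * r + (nu - q) * r = nu * r)%N.
Proof. by move=> h; rewrite -mulnDl subnKC. Qed.

Lemma Kbar_cols (q r nu : nat) : (q <= nu)%N -> (0 < r)%N ->
  (q * r.-1 + (nu - q) * r = nu * r - q)%N.
Proof.
move=> h hr; rewrite -(Kbar_rows r h).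
case: r hr => // r _ /=; nia.
Qed.

Definition Kbar (q r nu : nat) (hq : (q <= nu)%N) (hr : (0 < r)%N) (z : C)
  : 'M[C]_(nu * r, nu * r - q) :=
  castmx (Kbar_rows r hq, Kbar_cols hq hr)
   (block_mx
      (1%:M *t Fm r z + shiftmx q *t Fder r z)
      (- ((ell q *m (phi (nu - q))^T) *t Gm r z))
      0
      (1%:M *t (1%:M : 'M[C]_r) - shiftmx (nu - q) *t Gm r z)).

End Defs.

From HB Require Import structures.
From mathcomp Require Import all_boot all_order all_algebra.
From mathcomp Require Import mxtens zify ring.
Import Order.TTheory GRing.Theory Num.Theory.
Local Open Scope ring_scope.
Set Implicit Arguments. Unset Strict Implicit. Unset Printing Implicit Defensive.

(* The k-th block (1/k!) M^(k)(z) of N^0(z) has entries C(a+b, k) z^(a+b-k), the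
   Hasse derivatives of z^(a+b).  Multiplying N^0 by Kbar block by block, the
   F-columns vanish by Pascal's rule and the G-columns by the hockey-stick
   identity, which applies because they only involve blocks of order k >= q > a.
   The columns (k, 0), k < q, of N^0 form a lower unitriangular matrix, so
   rank N^0 = q.  Deleting the first row of every F-block turns Kbar into a block
   upper unitriangular square matrix, so Kbar has full column rank nu r - q,
   which is the dimension of the kernel of N^0. *)

Section Delta.
Variable R : comPzRingType.

Lemma sum_delta_scale (V : lmodType R) m i (f : nat -> V) :
  \sum_(k < m) (k == i :> nat)%:R *: f k = if (i < m)%N then f i else 0.
Proof.
case: ltnP => [lt_im|le_mi].
  rewrite (bigD1 (Ordinal lt_im)) //= eqxx scale1r big1 ?addr0 // => k ne_ki.
  by rewrite -val_eqE /= in ne_ki; rewrite (negbTE ne_ki) scale0r.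
by apply: big1 => k _; rewrite ltn_eqF ?scale0r // (leq_trans (ltn_ord k) le_mi).
Qed.

Lemma sum_delta_mul m i (f : nat -> R) :
  \sum_(k < m) f k * (k == i :> nat)%:R = if (i < m)%N then f i else 0.
Proof. under eq_bigr => k _ do rewrite mulrC; exact: (@sum_delta_scale R^o). Qed.

End Delta.

Section BlockRow.
Variable R : comPzRingType.

(* The block row (B 0 | ... | B (m-1)), indexed like a Kronecker product:
   column mxtens_index (k, b) is column b of B k. *)
Definition blkrow p n m (B : 'I_m -> 'M[R]_(p, n)) : 'M[R]_(p, m * n) :=
  \matrix_(a, J) B (mxtens_unindex J).1 a (mxtens_unindex J).2.

Lemma blkrowE p n m (B : 'I_m -> 'M[R]_(p, n)) a k b :
  blkrow B a (mxtens_index (k, b)) = B k a b.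
Proof. by rewrite mxE mxtens_indexK. Qed.

Lemma blkrowD p n m (B1 B2 : 'I_m -> 'M[R]_(p, n)) :
  blkrow B1 + blkrow B2 = blkrow (fun k => B1 k + B2 k).
Proof. by apply/matrixP => a J; rewrite !mxE. Qed.

Lemma blkrowN p n m (B : 'I_m -> 'M[R]_(p, n)) : - blkrow B = blkrow (fun k => - B k).
Proof. by apply/matrixP => a J; rewrite !mxE. Qed.

Lemma eq_blkrow p n m (B1 B2 : 'I_m -> 'M[R]_(p, n)) :
  (forall k, B1 k = B2 k) -> blkrow B1 = blkrow B2.
Proof. by move=> eB; apply/matrixP => a J; rewrite !mxE eB. Qed.

Lemma blkrow_eq0 p n m (B : 'I_m -> 'M[R]_(p, n)) : (forall k, B k = 0) -> blkrow B = 0.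
Proof. by move=> B0; apply/matrixP => a J; rewrite !mxE B0 mxE. Qed.

Lemma mxrow_blkrow p n m (B : 'I_m -> 'M[R]_(p, n)) :
  castmx (erefl p, sum_const_r m n) (\mxrow_(k < m) B k) = blkrow B.
Proof.
apply/matrixP => a J; rewrite castmxE mxE [RHS]mxE cast_ord_id.
set s := cast_ord _ J.
have -> : J = mxtens_index (tagnat.sig1 s, tagnat.sig2 s).
  apply: val_inj; rewrite /= [LHS](tagnat.rect s).
  by rewrite -(big_ord_widen _ (fun=> n) (ltnW (ltn_ord _))) sum_nat_const card_ord.
by rewrite mxtens_indexK.
Qed.

Lemma blkrow_split p n m1 m (le_m1m : (m1 <= m)%N) (B : nat -> 'M[R]_(p, n)) :
  blkrow (fun k : 'I_m => B k) =
  castmx (erefl p, Kbar_rows n le_m1m)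
    (row_mx (blkrow (fun k : 'I_m1 => B k))
            (blkrow (fun k : 'I_(m - m1) => B (m1 + k)%N))).
Proof.
apply/matrixP => a J; rewrite castmxE !mxE /=.
have n_gt0 : (0 < n)%N by case: (posnP n) J => // ->; rewrite muln0 => -[].
case: splitP => j /= eJ;
  rewrite mxE /= cast_ord_id; (congr (B _ a _); last apply: val_inj) => /=;
  by rewrite eJ ?divnMDl ?modnMDl.
Qed.

Lemma mulmx_blkrow_tens p n m m' n' (B : 'I_m -> 'M[R]_(p, n))
    (X : 'M[R]_(m, m')) (Y : 'M[R]_(n, n')) :
  blkrow B *m (X *t Y) = blkrow (fun j => \sum_k X k j *: (B k *m Y)).
Proof.
apply/matrixP => a J; case: (mxtens_indexP J) => j l.
rewrite blkrowE mxE summxE.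
rewrite (reindex (@mxtens_index m n)) /=; last first.
  by exists (@mxtens_unindex m n) => x _; rewrite (mxtens_indexK, mxtens_unindexK).
under [RHS]eq_bigr => k _ do rewrite !mxE big_distrr.
rewrite pair_big; apply: eq_bigr => -[k b] _ /=.
by rewrite blkrowE tensmxE mulrCA mulrA.
Qed.

Lemma mulmx_blkrow_tens1 p n m n' (B : 'I_m -> 'M[R]_(p, n)) (Y : 'M[R]_(n, n')) :
  blkrow B *m (1%:M *t Y) = blkrow (fun j => B j *m Y).
Proof.
rewrite mulmx_blkrow_tens; apply: eq_blkrow => j.
rewrite (bigD1 j) //= mxE eqxx scale1r big1 ?addr0 // => k /negbTE ne_kj.
by rewrite mxE ne_kj scale0r.
Qed.

Lemma castmx_mulmx p m m' n n' (e1 : m = m') (e2 : n = n')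
    (A : 'M[R]_(p, m)) (B : 'M[R]_(m, n)) :
  castmx (erefl p, e1) A *m castmx (e1, e2) B = castmx (erefl p, e2) (A *m B).
Proof. by case: m' / e1; case: n' / e2; rewrite !castmx_id. Qed.

End BlockRow.

Section Triangular.
Variable R : pzRingType.

Lemma is_trig_mxD m n (A B : 'M[R]_(m, n)) :
  is_trig_mx A -> is_trig_mx B -> is_trig_mx (A + B).
Proof.
move=> /is_trig_mxP tA /is_trig_mxP tB.
by apply/is_trig_mxP => i j lt_ij; rewrite mxE tA ?tB ?addr0.
Qed.

Lemma is_trig_mxN m n (A : 'M[R]_(m, n)) : is_trig_mx A -> is_trig_mx (- A).
Proof.
by move=> /is_trig_mxP tA; apply/is_trig_mxP => i j lt_ij; rewrite mxE tA ?oppr0.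
Qed.

Lemma is_trig_tensmx m1 m2 n (A : 'M[R]_(m1, m2)) (B : 'M[R]_n) :
  is_trig_mx A -> is_trig_mx B -> is_trig_mx (A *t B).
Proof.
move=> /is_trig_mxP tA /is_trig_mxP tB; apply/is_trig_mxP => I J.
case: (mxtens_indexP I) (mxtens_indexP J) => i1 i2 [j1 j2] /= lt_IJ.
rewrite tensmxE; have [lt_i1j1|lt_j1i1|e1] := ltngtP i1 j1; first by rewrite tA ?mul0r.
  by move: lt_IJ; have := ltn_ord j2; have := ltn_ord i2; nia.
by rewrite tB ?mulr0 //; move: lt_IJ; rewrite e1 ltn_add2l.
Qed.

End Triangular.

Section Unitriangular.
Variable R : comUnitRingType.

Lemma unitrig_unitmx n (A : 'M[R]_n) :
  is_trig_mx A -> (forall i, A i i = 1) -> A \in unitmx.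
Proof. by move=> tA dA; rewrite unitmxE det_trig // big1 ?unitr1. Qed.

Lemma trig_tr_unitmx n (A : 'M[R]_n) :
  is_trig_mx A^T -> (forall i, A i i = 1) -> A \in unitmx.
Proof.
by move=> tA dA; rewrite -unitmx_tr; apply: unitrig_unitmx => // i; rewrite mxE.
Qed.

End Unitriangular.

Section ColumnSpace.
Variable F : fieldType.

Lemma row_free_mulmx_unit m n (A : 'M[F]_(m, n)) (B : 'M[F]_(n, m)) :
  A *m B \in unitmx -> row_free A.
Proof.
move=> uAB; rewrite /row_free eqn_leq rank_leq_row /=.
by rewrite -{1}(mxrank_unit uAB) mxrankM_maxl.
Qed.

Lemma row_free_cast m1 n1 m2 n2 (e1 : m1 = m2) (e2 : n1 = n2) (A : 'M[F]_(m1, n1)) :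
  row_free (castmx (e1, e2) A) = row_free A.
Proof. by case: m2 / e1; case: n2 / e2; rewrite castmx_id. Qed.

Lemma row_free_tr_mulmx_eq0 n p (K : 'M[F]_(n, p)) (c : 'cV[F]_p) :
  row_free K^T -> K *m c = 0 -> c = 0.
Proof.
move=> fK Kc0; apply: trmx_inj; apply: (row_free_inj fK).
by rewrite -trmx_mul Kc0 !trmx0 mul0mx.
Qed.

Lemma mulmx_eq0_colspan m n p (N : 'M[F]_(m, n)) (K : 'M[F]_(n, p)) :
  N *m K = 0 -> row_free K^T -> (\rank N + p)%N = n ->
  forall x : 'cV[F]_n, N *m x = 0 <-> exists c : 'cV[F]_p, x = K *m c.
Proof.
move=> NK0 fK rankNK.
have ker_tr q (Y : 'M[F]_(n, q)) : N *m Y = 0 -> (Y^T <= kermx N^T)%MS.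
  by move=> NY0; rewrite sub_kermx -trmx_mul NY0 trmx0.
have /eqmxP eqK : (K^T == kermx N^T)%MS.
  rewrite -(mxrank_leqif_eq (ker_tr _ _ NK0)).2 mxrank_ker.
  by rewrite (eqP fK) mxrank_tr; apply/eqP; lia.
move=> x; split=> [/ker_tr|[c ->]]; last by rewrite mulmxA NK0 mul0mx.
rewrite -eqK => /submxP[c xE]; exists c^T.
by rewrite -[x]trmxK xE trmx_mul trmxK.
Qed.

End ColumnSpace.

Section HasseMonomial.
Variables (R : comNzRingType) (z : R).
Local Notation hX n k := ((('X^n : {poly R})^`N(k)).[z]).

Lemma hornerXn_nderivn0 n : hX n.+1 0 = z * hX n 0.
Proof. by rewrite !nderivn0 !hornerXn exprS. Qed.

Lemma hornerXn_nderivnS n k : hX n.+1 k.+1 = hX n k + z * hX n k.+1.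
Proof.
by rewrite exprSr -[_ * 'X]addr0 -polyC0 nderivnMXaddC hornerD hornerMX mulrC.
Qed.

Lemma hornerXn_nderivn_small n k : (n < k)%N -> hX n k = 0.
Proof. by move=> lt_nk; rewrite nderivn_poly0 ?horner0 // size_polyXn. Qed.

Lemma hornerXn_nderivnn n : hX n n = 1.
Proof. by rewrite nderivnXn subnn binn expr0 hornerC. Qed.

Lemma hornerXn_nderivn_hockey a k i : (a <= k)%N ->
  hX (a + i) k.+1 = \sum_(b < i) hX (a + b) k * z ^+ (i - b - 1).
Proof.
move=> le_ak; elim: i => [|i IHi].
  by rewrite big_ord0 addn0 hornerXn_nderivn_small.
rewrite addnS hornerXn_nderivnS IHi big_ord_recr /= subSnn subnn expr0 mulr1 addrC.
congr (_ + _); rewrite big_distrr /=; apply: eq_bigr => b _.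
by rewrite mulrCA -exprS; congr (_ * _ ^+ _); have := ltn_ord b; lia.
Qed.

End HasseMonomial.

Section KbarBlocks.
Variables (C : numClosedFieldType) (z : C).
Local Notation hX n k := ((('X^n : {poly C})^`N(k)).[z]).

Definition Mnderiv q r k : 'M[C]_(q, r) :=
  map_mx (fun p : {poly C} => (p^`N(k)).[z]) (Mpoly C q r).

Lemma MnderivE q r k a b : Mnderiv q r k a b = hX (a + b) k.
Proof. by rewrite !mxE big_ord1 !mxE exprD. Qed.

Lemma Mder_nderivn q r k : (k`!)%:R^-1 *: Mder q r k z = Mnderiv q r k.
Proof.
apply/matrixP => a b; rewrite !mxE nderivn_def hornerMn -[_.[z] *+ _]mulr_natl mulKf //.
by rewrite pnatr_eq0 -lt0n fact_gt0.
Qed.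

Lemma N0_blkrow q r nu : N0 q r nu z = blkrow (fun k : 'I_nu => Mnderiv q r k).
Proof.
by rewrite /N0 mxrow_blkrow; apply: eq_blkrow => k; rewrite Mder_nderivn.
Qed.

Lemma FmE r (b : 'I_r) (i : 'I_r.-1) :
  Fm r z b i = - z * (b == i :> nat)%:R + (b == i.+1 :> nat)%:R.
Proof.
rewrite !mxE; case: (eqVneq (b : nat) i) => [->|_].
  by rewrite (ltn_eqF (ltnSn i)) hornerN hornerX mulr1 addr0.
by case: eqP; rewrite ?hornerC mulr0 add0r.
Qed.

Lemma FderE r (b : 'I_r) (i : 'I_r.-1) : Fder r z b i = - (b == i :> nat)%:R.
Proof.
rewrite !mxE; case: eqP => _; first by rewrite derivN derivX hornerN hornerC.
by case: eqP => _; rewrite ?derivC hornerC oppr0.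
Qed.

Lemma sum_mul_Fm r (f : nat -> C) (i : 'I_r.-1) :
  \sum_(b < r) f b * Fm r z b i = f i.+1 - z * f i.
Proof.
have lt_ir : (i.+1 < r)%N by have := ltn_ord i; lia.
under eq_bigr => b _ do rewrite FmE mulrDr mulrA.
rewrite big_split /= (sum_delta_mul _ _ (fun b => f b * - z)) sum_delta_mul lt_ir.
by rewrite (ltnW lt_ir) addrC mulrN mulrC.
Qed.

Lemma sum_mul_Fder r (f : nat -> C) (i : 'I_r.-1) :
  \sum_(b < r) f b * Fder r z b i = - f i.
Proof.
have lt_ir : (i < r)%N by have := ltn_ord i; lia.
under eq_bigr => b _ do rewrite FderE mulrN.
by rewrite sumrN sum_delta_mul lt_ir.
Qed.

Lemma sum_mul_Gm r (f : nat -> C) (i : 'I_r) :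
  \sum_(b < r) f b * Gm r z b i = \sum_(b < i) f b * z ^+ (i - b - 1).
Proof.
rewrite (big_ord_widen r (fun b => f b * z ^+ (i - b - 1)) (ltnW (ltn_ord i))).
rewrite [RHS]big_mkcond /=; apply: eq_bigr => b _.
by rewrite mxE; case: ifP; rewrite ?mulr0.
Qed.

Lemma mulmx_MnderivE q r k n (X : 'M[C]_(r, n)) a j :
  (Mnderiv q r k *m X) a j = \sum_(b < r) hX (a + b) k * X b j.
Proof. by rewrite mxE; apply: eq_bigr => b _; rewrite MnderivE. Qed.

Lemma Mnderiv0_Fm q r : Mnderiv q r 0 *m Fm r z = 0.
Proof.
apply/matrixP => a i; rewrite mulmx_MnderivE (sum_mul_Fm (fun b => hX (a + b) 0)).
by rewrite addnS hornerXn_nderivn0 subrr mxE.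
Qed.

Lemma Mnderiv_Fm q r k :
  Mnderiv q r k.+1 *m Fm r z + Mnderiv q r k *m Fder r z = 0.
Proof.
apply/matrixP => a i; rewrite [LHS]mxE !mulmx_MnderivE.
rewrite (sum_mul_Fm (fun b => hX (a + b) k.+1)) (sum_mul_Fder (fun b => hX (a + b) k)).
rewrite addnS hornerXn_nderivnS mxE; ring.
Qed.

Lemma Mnderiv_Gm q r k : (q <= k.+1)%N -> Mnderiv q r k.+1 = Mnderiv q r k *m Gm r z.
Proof.
move=> le_qk; apply/matrixP => a i; rewrite mulmx_MnderivE MnderivE.
rewrite (sum_mul_Gm (fun b => hX (a + b) k)) hornerXn_nderivn_hockey //.
by have := ltn_ord a; lia.
Qed.

Lemma mulmx_blkrow_shift p n m n' (B : nat -> 'M[C]_(p, n)) (Y : 'M[C]_(n, n')) :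
  blkrow (fun k : 'I_m => B k) *m (shiftmx C m *t Y) =
  blkrow (fun j : 'I_m => if (j : nat) is i.+1 then B i *m Y else 0).
Proof.
rewrite mulmx_blkrow_tens; apply: eq_blkrow => -[[|i] lt_im] /=.
  by apply: big1 => k _; rewrite mxE scale0r.
under eq_bigr => k _ do rewrite mxE /= eqSS.
by rewrite (sum_delta_scale _ _ (fun k => B k *m Y)) ltnW.
Qed.

Lemma mulmx_blkrow_ellphi p n q m n' (B : nat -> 'M[C]_(p, n)) (Y : 'M[C]_(n, n')) :
  (0 < q)%N ->
  blkrow (fun k : 'I_q => B k) *m ((ell C q *m (phi C m)^T) *t Y) =
  blkrow (fun j : 'I_m => if (j : nat) is 0 then B q.-1 *m Y else 0).
Proof.
move=> q_gt0; rewrite mulmx_blkrow_tens; apply: eq_blkrow => -[[|i] lt_im] /=;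
  under eq_bigr => k _ do rewrite mxE big_ord1 !mxE /= ?mulr1 ?mulr0.
  by rewrite (sum_delta_scale _ _ (fun k => B k *m Y)) ltn_predL q_gt0.
by apply: big1 => k _; rewrite scale0r.
Qed.

Lemma blkrow_Mnderiv_mul_ul q r :
  blkrow (fun k : 'I_q => Mnderiv q r k) *m
    (1%:M *t Fm r z + shiftmx C q *t Fder r z) = 0.
Proof.
rewrite mulmxDr mulmx_blkrow_tens1 (@mulmx_blkrow_shift _ _ _ _ (Mnderiv q r)) blkrowD.
apply: blkrow_eq0 => -[[|k] _] /=; first by rewrite Mnderiv0_Fm addr0.
exact: Mnderiv_Fm.
Qed.

Lemma blkrow_Mnderiv_mul_ur q r m : (0 < q)%N ->
  blkrow (fun k : 'I_q => Mnderiv q r k) *m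
    - ((ell C q *m (phi C m)^T) *t Gm r z) +
  blkrow (fun k : 'I_m => Mnderiv q r (q + k)) *m
    (1%:M *t 1%:M - shiftmx C m *t Gm r z) = 0.
Proof.
move=> q_gt0; rewrite mulmxN mulmxBr (@mulmx_blkrow_ellphi _ _ _ _ _ (Mnderiv q r)) //.
rewrite mulmx_blkrow_tens1 (@mulmx_blkrow_shift _ _ _ _ (fun k => Mnderiv q r (q + k))).
rewrite !blkrowN !blkrowD; apply: blkrow_eq0 => -[[|k] _] /=.
  by rewrite mulmx1 subr0 addn0 -Mnderiv_Gm (prednK q_gt0) ?addNr.
by rewrite mulmx1 oppr0 add0r addnS -Mnderiv_Gm ?subrr // leqW ?leq_addr.
Qed.

Lemma N0_Kbar q r nu (le_qnu : (q <= nu)%N) (r_gt0 : (0 < r)%N) :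
  (0 < q)%N -> N0 q r nu z *m Kbar le_qnu r_gt0 z = 0.
Proof.
move=> q_gt0; rewrite N0_blkrow (@blkrow_split _ _ _ _ _ le_qnu (Mnderiv q r)) /Kbar.
rewrite castmx_mulmx mul_row_block mulmx0 addr0 blkrow_Mnderiv_mul_ul.
by rewrite blkrow_Mnderiv_mul_ur // row_mx0 castmx_const.
Qed.

Lemma rank_N0 q r nu : (q <= nu)%N -> (0 < r)%N -> \rank (N0 q r nu z) = q.
Proof.
move=> le_qnu r_gt0; apply/eqP.
pose col0 (k : 'I_q) := mxtens_index (widen_ord le_qnu k, Ordinal r_gt0).
apply: (@row_free_mulmx_unit _ _ _ _ (colsub col0 1%:M)).
rewrite mulmx_colsub mulmx1; apply: unitrig_unitmx => [|k].
  apply/is_trig_mxP => a k lt_ak.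
  by rewrite mxE N0_blkrow blkrowE MnderivE hornerXn_nderivn_small ?addn0.
by rewrite mxE N0_blkrow blkrowE MnderivE addn0 hornerXn_nderivnn.
Qed.

Lemma shiftmx_tr_trig n : is_trig_mx (shiftmx C n)^T.
Proof. by apply/is_trig_mxP => i j lt_ij; rewrite !mxE gtn_eqF // ltnW. Qed.

Lemma Gm_tr_trig r : is_trig_mx (Gm r z)^T.
Proof. by apply/is_trig_mxP => i j lt_ij; rewrite !mxE ltnNge ltnW. Qed.

Lemma row'0_FmE r (i j : 'I_r) :
  row' ord0 (Fm r.+1 z) i j = (i == j :> nat)%:R - z * (i.+1 == j :> nat)%:R.
Proof. by rewrite mxE FmE lift0 /= eqSS addrC mulNr. Qed.

Lemma row'0_FderE r (i j : 'I_r) :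
  row' ord0 (Fder r.+1 z) i j = - (i.+1 == j :> nat)%:R.
Proof. by rewrite mxE FderE lift0. Qed.

Lemma row'0_Fm_tr_trig r : is_trig_mx (row' ord0 (Fm r.+1 z))^T.
Proof.
apply/is_trig_mxP => i j lt_ij.
by rewrite mxE row'0_FmE (gtn_eqF lt_ij) (gtn_eqF (leqW lt_ij)) mulr0 subr0.
Qed.

Lemma row'0_Fder_tr_trig r : is_trig_mx (row' ord0 (Fder r.+1 z))^T.
Proof.
by apply/is_trig_mxP => i j lt_ij; rewrite mxE row'0_FderE (gtn_eqF (leqW lt_ij)) oppr0.
Qed.

Lemma unitmx_tens_Fm q r :
  1%:M *t row' ord0 (Fm r.+1 z) + shiftmx C q *t row' ord0 (Fder r.+1 z) \in unitmx.
Proof.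
apply: trig_tr_unitmx => [|J].
  rewrite linearD /= !trmx_tens trmx1.
  by apply: is_trig_mxD; apply: is_trig_tensmx; rewrite ?scalar_mx_is_trig
    ?shiftmx_tr_trig ?row'0_Fm_tr_trig ?row'0_Fder_tr_trig.
case: (mxtens_indexP J) => k b; rewrite mxE !tensmxE row'0_FmE row'0_FderE !mxE.
by rewrite !eqxx (gtn_eqF (ltnSn b)) (gtn_eqF (ltnSn k)) mulr0 subr0 mulr1 mul0r addr0.
Qed.

Lemma unitmx_tens_Gm m r : 1%:M *t 1%:M - shiftmx C m *t Gm r z \in unitmx.
Proof.
apply: trig_tr_unitmx => [|J].
  rewrite linearB /= !trmx_tens !trmx1.
  by apply: is_trig_mxD; [|apply: is_trig_mxN]; apply: is_trig_tensmx;
    rewrite ?scalar_mx_is_trig ?shiftmx_tr_trig ?Gm_tr_trig.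
case: (mxtens_indexP J) => k b; rewrite !mxE mxtens_indexK /= !eqxx ltnn.
by rewrite (gtn_eqF (ltnSn k)) mulr1 mul0r subr0.
Qed.

Lemma Kbar_tr_row_free q r nu (le_qnu : (q <= nu)%N) (r_gt0 : (0 < r)%N) :
  row_free (Kbar le_qnu r_gt0 z)^T.
Proof.
case: r r_gt0 => // r r_gt0; rewrite /Kbar trmx_cast row_free_cast.
(* P deletes the first row of every F-block; P * Kbar is block upper unitriangular. *)
pose P : 'M[C]_(q * r + (nu - q) * r.+1, q * r.+1 + (nu - q) * r.+1) :=
  block_mx (1%:M *t row' ord0 1%:M) 0 0 1%:M.
apply: (@row_free_mulmx_unit _ _ _ _ P^T); rewrite -trmx_mul unitmx_tr.
rewrite mulmx_block !mul0mx !mulmx0 !addr0 !add0r mul1mx mulmxDr !tensmx_mul !mul1mx.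
rewrite !row'Esub !mul_rowsub_mx !mul1mx -!row'Esub.
by rewrite unitmxE det_ublock unitrM -!unitmxE unitmx_tens_Fm unitmx_tens_Gm.
Qed.

End KbarBlocks.

Unset Implicit Arguments.

Theorem proposition4p6 (C : numClosedFieldType) (q r nu : nat)
  (hq0 : (0 < q)%N) (hr0 : (0 < r)%N) (hnu0 : (0 < nu)%N)
  (hqnu : (q < nu)%N) (hnur : (nu <= q + r - 1)%N) :
  (forall z : C, N0 q r nu z *m Kbar (ltnW hqnu) hr0 z = 0) /\
  (forall z : C,
     (forall x : 'cV[C]_(nu * r),
        N0 q r nu z *m x = 0 <-> exists c : 'cV[C]_(nu * r - q), x = Kbar (ltnW hqnu) hr0 z *m c) /\
     (forall c : 'cV[C]_(nu * r - q), Kbar (ltnW hqnu) hr0 z *m c = 0 -> c = 0)).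
Proof.
have NK0 (z : C) : N0 q r nu z *m Kbar (ltnW hqnu) hr0 z = 0 by exact: N0_Kbar.
split=> // z; have Kfree := Kbar_tr_row_free z (ltnW hqnu) hr0.
split=> [|c]; last exact: row_free_tr_mulmx_eq0.
have rankNK : (\rank (N0 q r nu z) + (nu * r - q))%N = (nu * r)%N.
  rewrite rank_N0 ?(ltnW hqnu) //; nia.
exact: mulmx_eq0_colspan (NK0 z) Kfree rankNK.
Qed.
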